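(* Every discrete fibration $F:\mathcal C\to\mathcal D$ between indiscretely based categories is an almost discrete fibration.
   Context: A functor $F:\mathcal E\to\mathcal B$ is a discrete fibration if for each object $E$ of $\mathcal E$ and each morphism $f:B\to F(E)$ there is a unique morphism $g:E'\to E$ with $F(g)=f$. An $\mathbb N$-grading on a category is a functor to $\mathbb N$ (viewed as a one-object category); a category is indiscretely based if it is $\mathbb N$-graded and each connected component of its subcategory of length-zero morphisms is indiscrete. A factorization $q=g_0\circ\cdots\circ g_{n+1}$ ($n\ge0$) is nontrivial if no $g_i$ is an isomorphism. $F:\mathcal C\to\mathcal D$ is an almost discrete fibration if for every morphism $q$ of $\mathcal D$, every $p$ with $F(p)=q$ and every nontrivial factorization $q=g_0\circ\cdots\circ g_{n+1}$, there is a nontrivial factorization $p=f_0\circ\cdots\circ f_{n+1}$ with $F(f_i)=g_i$ for all $i$, unique up to the relation $(f_0,\dots,f_{n+1})\sim(f'_0,\dots,f'_{n+1})$ if there are isomorphisms $h_0,\dots,h_n$ with $f'_0=f_0\circ h_0$, $f'_i=h_{i-1}^{-1}\circ f_i\circ h_i$ ($1\le i\le n$), $f'_{n+1}=h_n^{-1}\circ f_{n+1}$. *)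

(* Small categories presented "arrows-only": a type of
   objects, a single type of morphisms with domain/codomain maps, and a
   total composition operation whose laws are only required on composable
   pairs.  comp g f means g ∘ f (first f, then g). *)
From Stdlib Require Import Relations.

Record Cat := {
  Ob : Type;
  Mor : Type;
  dom : Mor -> Ob;
  cod : Mor -> Ob;
  idm : Ob -> Mor;
  comp : Mor -> Mor -> Mor;
  dom_idm : forall x, dom (idm x) = x;
  cod_idm : forall x, cod (idm x) = x;
  dom_comp : forall g f, dom g = cod f -> dom (comp g f) = dom f;
  cod_comp : forall g f, dom g = cod f -> cod (comp g f) = cod g;
  comp_idl : forall f, comp (idm (cod f)) f = f;
  comp_idr : forall f, comp f (idm (dom f)) = f;
  comp_assoc : forall h g f, dom h = cod g -> dom g = cod f ->
      comp h (comp g f) = comp (comp h g) f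
}.

Arguments dom {c} _.
Arguments cod {c} _.
Arguments idm {c} _.
Arguments comp {c} _ _.

Record Functor (C D : Cat) := {
  Fo : Ob C -> Ob D;
  Fm : Mor C -> Mor D;
  Fm_dom : forall f, dom (Fm f) = Fo (dom f);
  Fm_cod : forall f, cod (Fm f) = Fo (cod f);
  Fm_idm : forall x, Fm (idm x) = idm (Fo x);
  Fm_comp : forall g f, dom g = cod f -> Fm (comp g f) = comp (Fm g) (Fm f)
}.

Arguments Fo {C D} _ _.
Arguments Fm {C D} _ _.

(* Discrete fibration: for each E and f : B -> F E there is a unique
   morphism g : E' -> E with F g = f (the domain E' is part of g). *)
Definition discrete_fibration {C D : Cat} (F : Functor C D) : Prop :=
  forall (E : Ob C) (f : Mor D), cod f = Fo F E ->
    exists! g : Mor C, cod g = E /\ Fm F g = f.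

(* An N-grading: a functor to N viewed as a one-object category (monoid). *)
Definition N_grading (C : Cat) (len : Mor C -> nat) : Prop :=
  (forall x : Ob C, len (idm x) = 0) /\
  (forall g f : Mor C, dom g = cod f -> len (comp g f) = len g + len f).

Definition zero_arrow (C : Cat) (len : Mor C -> nat) (x y : Ob C) : Prop :=
  exists f : Mor C, len f = 0 /\ dom f = x /\ cod f = y.

Definition zero_connected (C : Cat) (len : Mor C -> nat) : relation (Ob C) :=
  clos_refl_sym_trans (Ob C) (zero_arrow C len).

Definition indiscretely_based (C : Cat) (len : Mor C -> nat) : Prop :=
  N_grading C len /\
  forall x y : Ob C, zero_connected C len x y ->
    exists! f : Mor C, len f = 0 /\ dom f = x /\ cod f = y.

Definition inverse_pair {C : Cat} (h k : Mor C) : Prop :=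
  dom h = cod k /\ cod h = dom k /\
  comp h k = idm (cod h) /\ comp k h = idm (dom h).

Definition is_iso {C : Cat} (h : Mor C) : Prop := exists k, inverse_pair h k.

Fixpoint chain {C : Cat} (g : nat -> Mor C) (m : nat) : Mor C :=
  match m with
  | 0 => g 0
  | S m' => comp (chain g m') (g (S m'))
  end.

(* q = g_0 ∘ ... ∘ g_{n+1}, a composable chain *)
Definition factorization {C : Cat} (q : Mor C) (n : nat) (g : nat -> Mor C) : Prop :=
  (forall i, i <= n -> dom (g i) = cod (g (S i))) /\ chain g (S n) = q.

Definition nontrivial_factorization {C : Cat} (q : Mor C) (n : nat)
    (g : nat -> Mor C) : Prop :=
  factorization q n g /\ forall i, i <= S n -> ~ is_iso (g i).

Definition fact_equiv {C : Cat} (n : nat) (f f' : nat -> Mor C) : Prop :=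
  exists h k : nat -> Mor C,
    (forall i, i <= n -> inverse_pair (h i) (k i) /\ cod (h i) = dom (f i)) /\
    f' 0 = comp (f 0) (h 0) /\
    (forall i, 1 <= i <= n -> f' i = comp (k (i - 1)) (comp (f i) (h i))) /\
    f' (S n) = comp (k n) (f (S n)).

Definition almost_discrete_fibration {C D : Cat} (F : Functor C D) : Prop :=
  forall (q : Mor D) (p : Mor C), Fm F p = q ->
  forall (n : nat) (g : nat -> Mor D), nontrivial_factorization q n g ->
    (exists f : nat -> Mor C, nontrivial_factorization p n f /\
        forall i, i <= S n -> Fm F (f i) = g i) /\
    (forall f f' : nat -> Mor C,
        nontrivial_factorization p n f -> (forall i, i <= S n -> Fm F (f i) = g i) ->
        nontrivial_factorization p n f' -> (forall i, i <= S n -> Fm F (f' i) = g i) ->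
        fact_equiv n f f').

(* A discrete fibration lifts a morphism [q] of [D] along any [p] over it
   uniquely once the codomain of the lift is fixed.  Lifting the factors of a
   factorization of [q] one after another, starting at [cod p], gives a
   composable chain over it; its composite lies over [q] and has codomain
   [cod p], so it is [p].  Two such lifts agree factor by factor, hence are
   related by identities.  Functors preserve isomorphisms, so the lift of a
   nontrivial factorization is nontrivial. *)
From Stdlib Require Import Arith Lia.

Definition composable {C : Cat} (f : nat -> Mor C) (m : nat) : Prop :=
  forall i, i < m -> dom (f i) = cod (f (S i)).

Section Chains.
Context {C : Cat}.

Lemma composable_le (f : nat -> Mor C) (m k : nat) :
  composable f m -> k <= m -> composable f k.
Proof. intros Hf Hk i Hi. apply Hf; lia. Qed.

Lemma factorization_composable (q : Mor C) (n : nat) (f : nat -> Mor C) :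
  factorization q n f -> composable f (S n).
Proof. intros [Hf _] i Hi. apply Hf; lia. Qed.

Lemma dom_chain (f : nat -> Mor C) (m : nat) :
  composable f m -> dom (chain f m) = dom (f m).
Proof.
  induction m as [|m IH]; intros Hf; simpl; [reflexivity|].
  apply dom_comp. rewrite IH by (apply (composable_le f (S m)); auto).
  apply Hf; lia.
Qed.

Lemma cod_chain (f : nat -> Mor C) (m : nat) :
  composable f m -> cod (chain f m) = cod (f 0).
Proof.
  induction m as [|m IH]; intros Hf; simpl; [reflexivity|].
  assert (Hm : composable f m) by (apply (composable_le f (S m)); auto).
  rewrite cod_comp; [auto|].
  rewrite dom_chain by exact Hm. apply Hf; lia.
Qed.

Lemma factorization_cod (q : Mor C) (n : nat) (f : nat -> Mor C) :
  factorization q n f -> cod (f 0) = cod q.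
Proof.
  intros Hq. pose proof (factorization_composable q n f Hq) as Hf.
  destruct Hq as [_ Hchain]. rewrite <- Hchain.
  symmetry. apply cod_chain. exact Hf.
Qed.

Lemma chain_ext (f g : nat -> Mor C) (m : nat) :
  (forall i, i <= m -> f i = g i) -> chain f m = chain g m.
Proof.
  induction m as [|m IH]; intros Hfg; simpl.
  - apply Hfg; lia.
  - rewrite IH, Hfg by first [lia | intros; apply Hfg; lia]. reflexivity.
Qed.

Lemma inverse_pair_idm (x : Ob C) : inverse_pair (idm x) (idm x).
Proof.
  unfold inverse_pair. rewrite dom_idm, cod_idm.
  assert (Hxx : comp (idm x) (idm x) = idm x).
  { pose proof (comp_idl C (idm x)) as H. rewrite cod_idm in H. exact H. }
  auto.
Qed.

Lemma fact_equiv_of_eq (n : nat) (f f' : nat -> Mor C) :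
  composable f (S n) -> (forall i, i <= S n -> f i = f' i) -> fact_equiv n f f'.
Proof.
  intros Hf Hff'.
  exists (fun i => idm (dom (f i))), (fun i => idm (dom (f i))).
  split; [|split; [|split]].
  - intros i _. split; [apply inverse_pair_idm | apply cod_idm].
  - rewrite comp_idr. symmetry. apply Hff'. lia.
  - intros i Hi.
    replace (dom (f (i - 1))) with (cod (f i)).
    + rewrite comp_idr, comp_idl. symmetry. apply Hff'. lia.
    + replace i with (S (i - 1)) at 1 by lia. symmetry. apply Hf. lia.
  - rewrite Hf, comp_idl by lia. symmetry. apply Hff'. lia.
Qed.

End Chains.

Section Functors.
Context {C D : Cat} (F : Functor C D).

Lemma Fm_chain (f : nat -> Mor C) (m : nat) :
  composable f m -> Fm F (chain f m) = chain (fun i => Fm F (f i)) m.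
Proof.
  induction m as [|m IH]; intros Hf; simpl; [reflexivity|].
  assert (Hm : composable f m) by (apply (composable_le f (S m)); auto).
  rewrite Fm_comp, IH by first [exact Hm | rewrite dom_chain by exact Hm; apply Hf; lia].
  reflexivity.
Qed.

Lemma Fm_iso (h : Mor C) : is_iso h -> is_iso (Fm F h).
Proof.
  intros [k [Hdom [Hcod [Hhk Hkh]]]]. exists (Fm F k).
  unfold inverse_pair. rewrite !Fm_dom, !Fm_cod.
  rewrite <- !Fm_comp, Hhk, Hkh, !Fm_idm by congruence.
  rewrite Hdom, Hcod. auto.
Qed.

Section DiscreteFibration.
Hypothesis DF : discrete_fibration F.

Lemma discrete_fibration_lift_eq (a b : Mor C) :
  cod a = cod b -> Fm F a = Fm F b -> a = b.
Proof.
  intros Hcod HF.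
  destruct (DF (cod a) (Fm F a) (Fm_cod _ _ F a)) as [x [_ Hx]].
  transitivity x; [symmetry|]; apply Hx; auto.
Qed.

Lemma discrete_fibration_lift_chain (g : nat -> Mor D) (E : Ob C) (m : nat) :
  composable g m -> cod (g 0) = Fo F E ->
  exists f : nat -> Mor C, composable f m /\ cod (f 0) = E /\
    forall i, i <= m -> Fm F (f i) = g i.
Proof.
  intros Hg HE. induction m as [|m IH].
  - destruct (DF E (g 0) HE) as [x [[Hx HFx] _]].
    exists (fun _ => x). split; [intros i Hi; lia|].
    split; [exact Hx|]. intros i Hi. replace i with 0 by lia. exact HFx.
  - destruct IH as [f [Hf [Hf0 HFf]]]; [apply (composable_le g (S m)); auto|].
    assert (Hnext : cod (g (S m)) = Fo F (dom (f m))).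
    { rewrite <- Hg, <- HFf by lia. apply Fm_dom. }
    destruct (DF _ _ Hnext) as [l [[Hl HFl] _]].
    exists (fun i => if i <=? m then f i else l). split; [|split].
    + intros i Hi. destruct (Nat.leb_spec i m); [|lia].
      destruct (Nat.leb_spec (S i) m); [apply Hf; lia|].
      replace i with m by lia. auto.
    + exact Hf0.
    + intros i Hi. destruct (Nat.leb_spec i m); [auto|].
      replace i with (S m) by lia. exact HFl.
Qed.

Lemma discrete_fibration_chain_lifts_eq (f f' : nat -> Mor C) (m : nat) :
  composable f m -> composable f' m -> cod (f 0) = cod (f' 0) ->
  (forall i, i <= m -> Fm F (f i) = Fm F (f' i)) ->
  forall i, i <= m -> f i = f' i.
Proof.
  intros Hf Hf' H0 HF i. induction i as [|i IH]; intros Hi.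
  - apply discrete_fibration_lift_eq; auto.
  - apply discrete_fibration_lift_eq; [|apply HF; lia].
    rewrite <- Hf, <- Hf', IH by lia. reflexivity.
Qed.

Lemma discrete_fibration_lift_factorization (p : Mor C) (n : nat) (g : nat -> Mor D) :
  factorization (Fm F p) n g ->
  exists f, factorization p n f /\ forall i, i <= S n -> Fm F (f i) = g i.
Proof.
  intros Hg.
  assert (Hcod : cod (g 0) = Fo F (cod p)).
  { rewrite (factorization_cod _ n g Hg). apply Fm_cod. }
  destruct (discrete_fibration_lift_chain g (cod p) (S n)
              (factorization_composable _ n g Hg) Hcod) as [f [Hf [Hf0 HFf]]].
  exists f. split; [split|exact HFf].
  - intros i Hi. apply Hf. lia.
  - apply discrete_fibration_lift_eq.
    + rewrite cod_chain by exact Hf. exact Hf0.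
    + destruct Hg as [_ Hchain]. rewrite Fm_chain, <- Hchain by exact Hf.
      apply chain_ext. exact HFf.
Qed.

Lemma discrete_fibration_almost_discrete : almost_discrete_fibration F.
Proof.
  intros q p Hp n g [Hg Hnontriv]. subst q. split.
  - destruct (discrete_fibration_lift_factorization p n g Hg) as [f [Hf HFf]].
    exists f. split; [split; [exact Hf|]|exact HFf].
    intros i Hi Hiso. apply (Hnontriv i Hi). rewrite <- HFf by exact Hi.
    apply Fm_iso. exact Hiso.
  - intros f f' [Hf _] HFf [Hf' _] HFf'.
    apply fact_equiv_of_eq; [exact (factorization_composable p n f Hf)|].
    apply (discrete_fibration_chain_lifts_eq f f' (S n));
      [exact (factorization_composable p n f Hf)
      |exact (factorization_composable p n f' Hf')
      |rewrite (factorization_cod p n f Hf), (factorization_cod p n f' Hf'); reflexivity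
      |intros i Hi; rewrite HFf, HFf' by exact Hi; reflexivity].
Qed.

End DiscreteFibration.
End Functors.

Theorem proposition2p76 (C D : Cat) (lenC : Mor C -> nat) (lenD : Mor D -> nat)
    (F : Functor C D) :
  indiscretely_based C lenC -> indiscretely_based D lenD ->
  discrete_fibration F -> almost_discrete_fibration F.
Proof.
  intros _ _. apply discrete_fibration_almost_discrete.
Qed.
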